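(* Let $R$ be a ring and $T$ a left denominator set of $R$ with $\mathrm{ass}(T)=0$ such that $T^{-1}R=R_1\times\cdots\times R_n$ is a direct product of left localization maximal rings $R_1,\ldots,R_n$. Let $\tau:R\to T^{-1}R$, $r\mapsto\frac{r}{1}=(r_1,\ldots,r_n)$. For $i=1,\ldots,n$ put $S_i:=R_1\times\cdots\times R_i^*\times\cdots\times R_n$ (with $R_i^*$ the group of units of $R_i$ in the $i$-th place) and $T_i:=\tau^{-1}(S_i)$. Then $\max\mathrm{Den}_l(R)=\{T_1,\ldots,T_n\}$ and $T_i^{-1}R\cong R_i$ for each $i$.
   Context: All rings are associative with $1$. A multiplicative subset $S$ of $R$ ($1\in S$, $0\notin S$, closed under multiplication) is a left Ore set if $Sr\cap Rs\neq\emptyset$ for all $r\in R$, $s\in S$; for it, $\mathrm{ass}(S):=\{r\in R: sr=0\text{ for some } s\in S\}$. A left Ore set $S$ is a left denominator set if $rs=0$ ($r\in R$, $s\in S$) implies $tr=0$ for some $t\in S$. $\mathrm{Den}_l(R)$ is the set of left denominator sets, $S^{-1}R$ the left localization, $\max\mathrm{Den}_l(R)$ the set of maximal elements of $(\mathrm{Den}_l(R),\subseteq)$. For a ring $A$, $S_0(A)$ is the largest left Ore set of $A$ consisting of regular elements and $Q_l(A):=S_0(A)^{-1}A$. A ring $A$ is a left localization maximal ring if $A=Q_l(A)$ (i.e. $S_0(A)$ consists of units) and $\{\mathrm{ass}(S):S\in\mathrm{Den}_l(A)\}=\{0\}$. *)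

From HB Require Import structures.
From mathcomp Require Import all_boot all_order all_algebra.
Set Implicit Arguments. Unset Strict Implicit. Unset Printing Implicit Defensive.
Import GRing.Theory.
Local Open Scope ring_scope.

Section ProdRing.
Variables (n : nat) (R_ : 'I_n -> nzRingType).

Definition prodR := {dffun forall i : 'I_n, R_ i}.
HB.instance Definition _ := Choice.on prodR.

Definition pr_zero : prodR := [ffun i => 0].
Definition pr_one : prodR := [ffun i => 1].
Definition pr_opp (a : prodR) : prodR := [ffun i => - a i].
Definition pr_add (a b : prodR) : prodR := [ffun i => a i + b i].
Definition pr_mul (a b : prodR) : prodR := [ffun i => a i * b i].

Lemma pr_addA : associative pr_add.
Proof. by move=> a b c; apply/ffunP => i; rewrite !ffunE addrA. Qed.
Lemma pr_addC : commutative pr_add.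
Proof. by move=> a b; apply/ffunP => i; rewrite !ffunE addrC. Qed.
Lemma pr_add0 : left_id pr_zero pr_add.
Proof. by move=> a; apply/ffunP => i; rewrite !ffunE add0r. Qed.
Lemma pr_addN : left_inverse pr_zero pr_opp pr_add.
Proof. by move=> a; apply/ffunP => i; rewrite !ffunE addNr. Qed.

HB.instance Definition _ :=
  GRing.isZmodule.Build prodR pr_addA pr_addC pr_add0 pr_addN.

Lemma pr_mulA : associative pr_mul.
Proof. by move=> a b c; apply/ffunP => i; rewrite !ffunE mulrA. Qed.
Lemma pr_mul1 : left_id pr_one pr_mul.
Proof. by move=> a; apply/ffunP => i; rewrite !ffunE mul1r. Qed.
Lemma pr_mulr1 : right_id pr_one pr_mul.
Proof. by move=> a; apply/ffunP => i; rewrite !ffunE mulr1. Qed.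
Lemma pr_mulDl : left_distributive pr_mul (@GRing.add prodR).
Proof. by move=> a b c; apply/ffunP => i; rewrite !ffunE mulrDl. Qed.
Lemma pr_mulDr : right_distributive pr_mul (@GRing.add prodR).
Proof. by move=> a b c; apply/ffunP => i; rewrite !ffunE mulrDr. Qed.

HB.instance Definition _ :=
  GRing.Zmodule_isPzRing.Build prodR pr_mulA pr_mul1 pr_mulr1 pr_mulDl pr_mulDr.

Lemma prodR_mulE (a b : prodR) i : (a * b) i = a i * b i.
Proof. by rewrite /GRing.mul /= ffunE. Qed.
End ProdRing.

Definition is_unit (R : pzRingType) (x : R) : Prop :=
  exists y : R, x * y = 1 /\ y * x = 1.

Section Ore.
Variable R : pzRingType.

Definition multiplicative (S : R -> Prop) : Prop :=
  [/\ S 1, ~ S 0 & forall s t, S s -> S t -> S (s * t)].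

Definition left_Ore (S : R -> Prop) : Prop :=
  multiplicative S /\
  forall (r s : R), S s -> exists (s' r' : R), S s' /\ s' * r = r' * s.

Definition ass (S : R -> Prop) (r : R) : Prop := exists s, S s /\ s * r = 0.

Definition left_den (S : R -> Prop) : Prop :=
  left_Ore S /\
  forall (r s : R), S s -> r * s = 0 -> exists t, S t /\ t * r = 0.

Definition max_left_den (S : R -> Prop) : Prop :=
  left_den S /\
  forall S' : R -> Prop, left_den S' -> (forall x, S x -> S' x) ->
    forall x, S' x -> S x.

Definition regular (x : R) : Prop :=
  (forall y, x * y = 0 -> y = 0) /\ (forall y, y * x = 0 -> y = 0).

Definition is_S0 (S : R -> Prop) : Prop :=
  [/\ left_Ore S, (forall x, S x -> regular x) &
      forall S' : R -> Prop, left_Ore S' -> (forall x, S' x -> regular x) ->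
        forall x, S' x -> S x].

(** [f : R -> A] is a left localization of R at S, i.e. (A, f) = (S^{-1}R, r |-> r/1)
   up to isomorphism: f(S) consists of units, every element of A is a left
   fraction f(s)^{-1} f(r), and ker f = ass(S). *)
Definition is_left_localization (S : R -> Prop) (A : pzRingType)
    (f : {rmorphism R -> A}) : Prop :=
  [/\ forall s, S s -> is_unit (f s),
      forall a : A, exists s r, S s /\ f s * a = f r &
      forall r, f r = 0 <-> ass S r].
End Ore.

(** left localization maximal ring: Q_l(A) = A, i.e. S_0(A) consists of units,
   and ass(S) = 0 for every left denominator set S of A. *)
Definition left_loc_max (A : pzRingType) : Prop :=
  (exists S0 : A -> Prop, is_S0 S0 /\ forall x, S0 x -> is_unit x) /\
  (forall S : A -> Prop, left_den S -> forall r, ass S r -> r = 0).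

From Pilot Require Import Defs.
From HB Require Import structures.
From mathcomp Require Import all_boot all_order all_algebra.
From Stdlib Require Import Classical FunctionalExtensionality PropExtensionality.
Set Implicit Arguments. Unset Strict Implicit. Unset Printing Implicit Defensive.
Import GRing.Theory.
Local Open Scope ring_scope.

(* Since ass(T) = 0, R embeds in T^{-1}R = R_1 x ... x R_n, and T_i is the set
   of r whose i-th coordinate is a unit.  Each T_i is a left denominator set
   with ass(T_i) = {r | r_i = 0}, so T_i^{-1}R = R_i.  Conversely, let S be a
   maximal left denominator set.  Together with T it generates a left
   denominator set, so T is contained in S.  Some coordinate i never vanishes
   on S (otherwise a product of elements of S would be 0), and then the
   image of S in R_i is a left denominator set of R_i.  Since R_i is left
   localization maximal, this image consists of units, i.e. S is contained
   in T_i, and maximality gives S = T_i. *)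

Section ProductRing.
Variables (n : nat) (R_ : 'I_n -> nzRingType).

Lemma prodR1E i : (1 : prodR R_) i = 1.
Proof. by rewrite /GRing.one /= ffunE. Qed.

Lemma prodR0E i : (0 : prodR R_) i = 0.
Proof. by rewrite /GRing.zero /= ffunE. Qed.

Lemma prodRBE (a b : prodR R_) i : (a - b) i = a i - b i.
Proof. by rewrite /GRing.add /GRing.opp /= !ffunE. Qed.

Definition prodR_single (i : 'I_n) (a : R_ i) : prodR R_ :=
  @finfun _ (fun j => GRing.NzRing.sort (R_ j))
    (fun j => match @eqP _ i j return R_ j with
              | ReflectT e => ecast k (R_ k) e a
              | ReflectF _ => 0 end).

Lemma prodR_singleE i (a : R_ i) : prodR_single a i = a.
Proof. by rewrite /prodR_single ffunE; case: eqP => // e; rewrite eq_axiomK. Qed.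

Lemma prodR_single_neq i (a : R_ i) j : i != j -> prodR_single a j = 0.
Proof. by rewrite /prodR_single ffunE; case: eqP. Qed.

Lemma is_unit_component (x : prodR R_) i : is_unit x -> is_unit (x i).
Proof.
move=> [y [xy yx]]; exists (y i).
by rewrite -!prodR_mulE xy yx prodR1E.
Qed.

Definition prodR_proj (i : 'I_n) (a : prodR R_) : R_ i := a i.

Lemma prodR_proj_is_zmod_morphism i : zmod_morphism (prodR_proj i).
Proof. by move=> a b; rewrite /prodR_proj prodRBE. Qed.

Lemma prodR_proj_is_monoid_morphism i : monoid_morphism (prodR_proj i).
Proof. by split=> [|a b]; rewrite /prodR_proj ?prodR1E ?prodR_mulE. Qed.

HB.instance Definition _ i :=
  GRing.isZmodMorphism.Build _ _ (prodR_proj i) (prodR_proj_is_zmod_morphism i).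
HB.instance Definition _ i :=
  GRing.isMonoidMorphism.Build _ _ (prodR_proj i) (prodR_proj_is_monoid_morphism i).
End ProductRing.

Lemma is_unitM (A : pzRingType) (a b : A) :
  is_unit a -> is_unit b -> is_unit (a * b).
Proof.
move=> [x [ax xa]] [y [by' yb]]; exists (y * x); split.
  by rewrite -mulrA (mulrA b) by' mul1r ax.
by rewrite -mulrA (mulrA x) xa mul1r yb.
Qed.

Lemma not_is_unit0 (A : nzRingType) : ~ is_unit (0 : A).
Proof. by move=> [y [+ _]]; rewrite mul0r => /eqP; rewrite eq_sym oner_eq0. Qed.

(* As ass(S) = 0, every element of S is regular, so S lies in S_0(A). *)
Lemma left_den_is_unit (A : pzRingType) (S : A -> Prop) :
  left_loc_max A -> left_den S -> forall x, S x -> is_unit x.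
Proof.
move=> [[S0 [[_ _ S0max] S0_unit]] assA] HS x Sx; apply: S0_unit.
apply: (S0max S HS.1) => // {}x {}Sx; split=> y xy0; apply: (assA S HS).
  by exists x.
by have [t [St ty0]] := HS.2 y x Sx xy0; exists t.
Qed.

Section Localization.
Variables (R : nzRingType) (T : R -> Prop) (n : nat) (R_ : 'I_n -> nzRingType)
  (tau : {rmorphism R -> prodR R_}).
Hypotheses (HT : left_den T) (assT0 : forall r, ass T r -> r = 0)
  (R_max : forall i, left_loc_max (R_ i)) (Hloc : is_left_localization T tau).

Definition T_ (i : 'I_n) (r : R) : Prop := is_unit (tau r i).

Lemma components_eq0 r : (forall j, tau r j = 0) -> r = 0.
Proof.
case: Hloc => _ _ ker_tau r0; apply/assT0/ker_tau.
by apply/ffunP => j; rewrite r0 prodR0E.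
Qed.

Lemma T_sub_T_ i t : T t -> T_ i t.
Proof. by case: Hloc => T_unit _ _ Tt; apply/is_unit_component/T_unit. Qed.

Lemma component_fraction i (a : R_ i) : exists t q,
  [/\ T t, tau t i * a = tau q i & forall j, i != j -> tau q j = 0].
Proof.
case: Hloc => _ fraction _; have [t [q [Tt tq]]] := fraction (prodR_single a).
exists t, q; split=> // [|j ij]; rewrite -tq prodR_mulE.
  by rewrite prodR_singleE.
by rewrite prodR_single_neq ?mulr0.
Qed.

(* A fraction of 1 at place i is an element of T_i killing every other place. *)
Lemma ass_T_ i r : ass (T_ i) r <-> tau r i = 0.
Proof.
split=> [[s [[v [_ vs]] sr0]] | ri0].
  have : tau s i * tau r i = 0 by rewrite -prodR_mulE -rmorphM sr0 rmorph0 prodR0E.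
  by move/(congr1 (GRing.mul v)); rewrite mulrA vs mul1r mulr0.
have [t [q [Tt tq qj0]]] := component_fraction (1 : R_ i).
exists q; split; first by rewrite /T_ -tq mulr1; apply: T_sub_T_.
apply: components_eq0 => j; rewrite rmorphM prodR_mulE.
by case: (eqVneq i j) => [<-|ij]; [rewrite ri0 mulr0 | rewrite qj0 ?mul0r].
Qed.

Lemma T_left_Ore i : left_Ore (T_ i).
Proof.
split; first split.
- by rewrite /T_ rmorph1 prodR1E; exists 1; rewrite mulr1.
- by rewrite /T_ rmorph0 prodR0E; apply: not_is_unit0.
- by move=> s t; rewrite /T_ rmorphM prodR_mulE; apply: is_unitM.
move=> r s [v [sv vs]].
have [t1 [q1 [Tt1 tq1 _]]] := component_fraction (tau r i * v).
have [t0 [q0 [Tt0 tq0 q0j0]]] := component_fraction (1 : R_ i).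
exists (q0 * t1), (q0 * q1); split.
  rewrite /T_ rmorphM prodR_mulE -tq0 mulr1.
  by apply: is_unitM; apply: T_sub_T_.
apply/eqP; rewrite -subr_eq0; apply/eqP/components_eq0 => j.
rewrite rmorphB prodRBE !rmorphM !prodR_mulE.
case: (eqVneq i j) => [<-|ij]; last by rewrite q0j0 // !mul0r subrr.
by rewrite -tq1 -!mulrA vs mulr1 subrr.
Qed.

Lemma T_left_den i : left_den (T_ i).
Proof.
split=> [|r s [v [sv _]] rs0]; first exact: T_left_Ore.
apply/ass_T_.
have : tau r i * tau s i = 0 by rewrite -prodR_mulE -rmorphM rs0 rmorph0 prodR0E.
by move/(congr1 (GRing.mul^~ v)); rewrite -mulrA sv mulr1 mul0r.
Qed.

Lemma T_localization i : is_left_localization (T_ i) (prodR_proj i \o tau).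
Proof.
split=> [s Ts | a | r]; first exact: Ts.
  have [t [q [Tt tq _]]] := component_fraction a.
  by exists t, q; split; [apply: T_sub_T_ | exact: tq].
exact: iff_sym (ass_T_ i r).
Qed.

Definition component_image (M : R -> Prop) (i : 'I_n) : R_ i -> Prop :=
  fun a => exists m, M m /\ a = tau m i.
Arguments component_image : clear implicits.

Section ComponentImage.
Variables (M : R -> Prop) (i : 'I_n).
Hypotheses (HM : left_den M) (T_sub_M : forall t, T t -> M t)
  (M_nz : forall m, M m -> tau m i <> 0).

Lemma component_image_left_Ore : left_Ore (component_image M i).
Proof.
have [[[M1 _ MM] M_Ore] _] := HM.
split; first split.
- by exists 1; rewrite rmorph1 prodR1E.
- by move=> [m [Mm m0]]; apply: (M_nz Mm).
- move=> _ _ [m [Mm ->]] [m' [Mm' ->]].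
  by exists (m * m'); rewrite rmorphM prodR_mulE; split=> //; apply: MM.
move=> a _ [m [Mm ->]].
have [t [q [Tt tq _]]] := component_fraction a.
have [m' [r' [Mm' m'q]]] := M_Ore q m Mm.
exists (tau (m' * t) i), (tau r' i); split.
  by exists (m' * t); split=> //; apply/MM/T_sub_M.
by rewrite rmorphM prodR_mulE -mulrA tq -!prodR_mulE -!rmorphM m'q.
Qed.

Lemma component_image_left_den : left_den (component_image M i).
Proof.
split=> [|a _ [m [Mm ->]] am0]; first exact: component_image_left_Ore.
have [[[_ _ MM] _] M_den] := HM.
have [t [q [Tt tq qj0]]] := component_fraction a.
have qm0 : q * m = 0.
  apply: components_eq0 => j; rewrite rmorphM prodR_mulE.
  case: (eqVneq i j) => [<-|ij]; last by rewrite qj0 ?mul0r.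
  by rewrite -tq -mulrA am0 mulr0.
have [m' [Mm' m'q0]] := M_den q m Mm qm0.
exists (tau (m' * t) i); split.
  by exists (m' * t); split=> //; apply/MM/T_sub_M.
by rewrite rmorphM prodR_mulE -mulrA tq -prodR_mulE -rmorphM m'q0 rmorph0 prodR0E.
Qed.

Lemma left_den_sub_T_ m : M m -> T_ i m.
Proof.
move=> Mm; apply: (left_den_is_unit (R_max i) component_image_left_den).
by exists m.
Qed.
End ComponentImage.

Inductive den_join (S : R -> Prop) : R -> Prop :=
| den_join_l x : S x -> den_join S x
| den_join_r x : T x -> den_join S x
| den_joinM x y : den_join S x -> den_join S y -> den_join S (x * y).

Section DenJoin.
Variable S : R -> Prop.
Hypothesis HS : left_den S.

Lemma den_join_ass x r : den_join S x -> r * x = 0 -> ass S r.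
Proof.
have [[[S1 _ SM] _] S_den] := HS.
move=> Jx; elim: Jx r => {x} [x Sx | x Tx | x y _ IHx _ IHy] r rx0.
- exact: S_den rx0.
- have [t [Tt tr0]] := HT.2 r x Tx rx0.
  by exists 1; split=> //; rewrite mul1r; apply: assT0; exists t.
- have [s [Ss srx0]] := IHy (r * x) ltac:(by rewrite -mulrA).
  have [s' [Ss' s'sr0]] := IHx (s * r) ltac:(by rewrite -mulrA).
  by exists (s' * s); split; [apply: SM | rewrite -mulrA].
Qed.

Lemma den_join_left_den : left_den (den_join S).
Proof.
have [[[S1 S0 _] S_Ore] S_den] := HS.
have [[_ T_Ore] T_den] := HT.
split; first split; first split.
- exact: den_join_l.
- move=> J0; have [s [Ss s0]] := den_join_ass J0 (mulr0 1).
  by apply: S0; rewrite -s0 mulr1.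
- exact: den_joinM.
- move=> r x Jx; elim: Jx r => {x} [x Sx | x Tx | x y _ IHx _ IHy] r.
  + have [s' [r' [Ss' E]]] := S_Ore r x Sx.
    by exists s', r'; split=> //; apply: den_join_l.
  + have [t' [r' [Tt' E]]] := T_Ore r x Tx.
    by exists t', r'; split=> //; apply: den_join_r.
  + have [m1 [r1 [J1 E1]]] := IHy r.
    have [m2 [r2 [J2 E2]]] := IHx r1.
    exists (m2 * m1), r2; split; first exact: den_joinM.
    by rewrite -mulrA E1 mulrA E2 mulrA.
- move=> r x Jx; elim: Jx r => {x} [x Sx | x Tx | x y _ IHx _ IHy] r rx0.
  + have [s [Ss sr0]] := S_den r x Sx rx0.
    by exists s; split=> //; apply: den_join_l.
  + have [t [Tt tr0]] := T_den r x Tx rx0.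
    by exists t; split=> //; apply: den_join_r.
  + have [m1 [J1 E1]] := IHy (r * x) ltac:(by rewrite -mulrA).
    have [m2 [J2 E2]] := IHx (m1 * r) ltac:(by rewrite -mulrA).
    by exists (m2 * m1); split; [apply: den_joinM | rewrite -mulrA].
Qed.
End DenJoin.

Lemma max_left_den_sup_T (S : R -> Prop) :
  max_left_den S -> forall t, T t -> S t.
Proof.
move=> [HS S_max] t Tt.
exact: (S_max _ (den_join_left_den HS) (@den_join_l S) t (den_join_r S Tt)).
Qed.

Lemma vanishing_product (S : R -> Prop) (l : seq 'I_n) :
  Defs.multiplicative S ->
  (forall j, exists s, S s /\ tau s j = 0) ->
  exists s, S s /\ {in l, forall j, tau s j = 0}.
Proof.
move=> [S1 _ SM] vanish; elim: l => [|a l [s [Ss s0]]]; first by exists 1.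
have [s' [Ss' s'a0]] := vanish a.
exists (s * s'); split=> [|j]; first exact: SM.
rewrite inE rmorphM prodR_mulE => /predU1P [->|jl]; first by rewrite s'a0 mulr0.
by rewrite s0 ?mul0r.
Qed.

Lemma multiplicative_component_nz (S : R -> Prop) : Defs.multiplicative S ->
  exists i, forall s, S s -> tau s i <> 0.
Proof.
move=> HS; apply: NNPP => no_i.
have vanish j : exists s, S s /\ tau s j = 0.
  apply: NNPP => no_s; apply: no_i; exists j => s Ss sj0.
  by apply: no_s; exists s.
have [s [Ss s0]] := vanishing_product (enum 'I_n) HS vanish.
case: HS => _ S0 _; apply: S0.
by rewrite -(components_eq0 (r := s)) // => j; rewrite s0 ?mem_enum.
Qed.

Lemma max_left_den_T_ i : max_left_den (T_ i).
Proof.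
split=> [|S HS T_sub_S]; first exact: T_left_den.
apply: left_den_sub_T_ => // [t Tt | m Sm mi0].
  exact/T_sub_S/T_sub_T_.
have [s [Ts sm0]] := (ass_T_ i m).2 mi0.
case: HS => [[[_ S0 SM] _] _]; apply: S0.
by rewrite -sm0; apply: SM => //; apply: T_sub_S.
Qed.

Lemma max_left_denE (S : R -> Prop) :
  max_left_den S <-> exists i, forall r, S r <-> T_ i r.
Proof.
split=> [HS | [i SE]].
  have [i S_nz] := multiplicative_component_nz HS.1.1.1.
  have S_sub : forall r, S r -> T_ i r.
    exact: left_den_sub_T_ HS.1 (max_left_den_sup_T HS) S_nz.
  exists i => r; split; first exact: S_sub.
  exact: HS.2 _ (T_left_den i) S_sub r.
have -> : S = T_ i.
  by apply: functional_extensionality => r; apply: propositional_extensionality.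
exact: max_left_den_T_.
Qed.
End Localization.

Theorem theorem3p12 (R : nzRingType) (T : R -> Prop) (n : nat)
    (R_ : 'I_n -> nzRingType)
    (tau : {rmorphism R -> prodR R_}) :
  left_den T ->
  (forall r, ass T r -> r = 0) ->
  (forall i, left_loc_max (R_ i)) ->
  is_left_localization T tau ->
  let T_ := fun (i : 'I_n) (r : R) => is_unit (tau r i) in
  (forall S : R -> Prop,
     max_left_den S <-> exists i : 'I_n, forall r, S r <-> T_ i r) /\
  (forall i : 'I_n, exists f : {rmorphism R -> R_ i},
     is_left_localization (T_ i) f).
Proof.
move=> HT assT0 R_max Hloc T_; split=> [S | i].
  exact: max_left_denE HT assT0 R_max Hloc S.
exists (prodR_proj i \o tau : {rmorphism R -> R_ i}).
exact (T_localization assT0 Hloc i).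
Qed.
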